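(* Let $q\ge2$, $G\in\mathbb G^q$, $S=\Psi(G)$, and let $i\neq j$ in $\{1,\dots,q\}$. Let $S_{ij}$ be the subgraph of $S$ consisting of all edges of colors $i$ and $j$ together with their endpoints. If $S_{ij}$ is a forest, then for every color-$0$ edge of $G$, its two endpoints belong to the same color-$ij$ cycle of $G$ (i.e. the same connected component of the subgraph of $G$ formed by the edges of colors $i$ and $j$).
   Context: Fix an integer $q\ge 2$. A $(q+1)$-edge-colored graph (colored graph) is a finite connected graph, multiple edges allowed and no loops, whose edges carry colors in $\{0,1,\dots,q\}$ such that every vertex is incident to exactly one edge of each color. It is rooted if one color-0 edge is distinguished and oriented; it is bipartite if its vertices can be colored black and white so that every edge joins a black and a white vertex, with the convention that the origin of the root edge is black. $\mathbb G^q$ denotes the set of rooted bipartite colored graphs. Constellations: given $G\in\mathbb G^q$, its constellation $S=\Psi(G)$ is obtained as follows: orient every edge from its black to its white endpoint; contract every color-0 edge into a single vertex, called a white vertex of $S$. For each $i\in\{1,\dots,q\}$ the color-$i$ edges now form directed cycles; for each such cycle, passing through white vertices $w_1,\dots,w_p$ in this cyclic order, add a new vertex of color $i$ joined by one color-$i$ edge to each $w_k$, equip the new vertex with the cyclic order $(w_1,\dots,w_p)$ of its incident edges, and delete the original color-$i$ edges of the cycle. *)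

From HB Require Import structures.
From mathcomp Require Import all_boot.
Set Implicit Arguments. Unset Strict Implicit. Unset Printing Implicit Defensive.

(* A (q+1)-edge-colored graph with vertex set V (a finType) is encoded by
   [sigma : 'I_q.+1 -> V -> V]: [sigma c v] is the other endpoint of the unique
   color-c edge at v.  Multiple
   edges (of distinct colors) are allowed; the absence of loops is
   [sigma c v != v]; [sigma c] is an involution. *)

Definition adjG (q : nat) (V : finType) (sigma : 'I_q.+1 -> V -> V) : rel V :=
  fun x y => [exists c : 'I_q.+1, y == sigma c x].

Definition colored_graph (q : nat) (V : finType) (sigma : 'I_q.+1 -> V -> V) : Prop :=
  [/\ forall c v, sigma c (sigma c v) = v,
      forall c v, sigma c v != v &
      forall u v, connect (adjG sigma) u v].

(* rooted bipartite colored graph: root edge = the color-0 edge {r, sigma 0 r}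
   oriented from r; [black] is the bipartition, with the root origin black. *)
Definition rooted_bipartite_colored_graph (q : nat) (V : finType)
  (sigma : 'I_q.+1 -> V -> V) (black : pred V) (r : V) : Prop :=
  [/\ colored_graph sigma,
      forall c v, black (sigma c v) = ~~ black v &
      black r].

(* ---- The constellation S = Psi(G) ----
   White vertices of S = color-0 edges of G; each is represented by its
   (unique) black endpoint b.  The color-i edge of G leaving black b goes to the
   white vertex sigma i b, which lies on the color-0 edge whose black endpoint is
   sigma 0 (sigma i b).  So after contraction the color-i edges define the
   successor map below on white vertices of S; its cycles are the color-i
   vertices of S. *)
Definition cst_succ (q : nat) (V : finType) (sigma : 'I_q.+1 -> V -> V)
  (i : 'I_q.+1) : V -> V := fun v => sigma ord0 (sigma i v).

Definition cst_cycle (q : nat) (V : finType) (sigma : 'I_q.+1 -> V -> V)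
  (i : 'I_q.+1) (b : V) : {set V} :=
  [set b' | fconnect (cst_succ sigma i) b b'].

(* Vertices of S: [inl b] is the white vertex (black representative b),
   [inr (c, C)] is the color-c vertex associated with the cycle C. *)
Definition cst_vertex (q : nat) (V : finType) := (V + ('I_q.+1 * {set V}))%type.

Definition cst_edge_col (q : nat) (V : finType) (sigma : 'I_q.+1 -> V -> V)
  (black : pred V) (c : 'I_q.+1) (b : V) (C : {set V}) : bool :=
  [&& black b, c != ord0 & C == cst_cycle sigma c b].

Definition Sij_rel (q : nat) (V : finType) (sigma : 'I_q.+1 -> V -> V)
  (black : pred V) (i j : 'I_q.+1) : rel (cst_vertex q V) :=
  fun x y =>
    match x, y with
    | inl b, inr (c, C) | inr (c, C), inl b =>
        ((c == i) || (c == j)) && cst_edge_col sigma black c b C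
    | _, _ => false
    end.

(* a cycle in a simple graph given by a symmetric relation: at least 3
   distinct vertices, consecutive ones (cyclically) adjacent *)
Definition has_cycle (T : eqType) (e : rel T) : Prop :=
  exists s : seq T, [/\ 2 < size s, uniq s & cycle e s].

Definition is_forest (T : eqType) (e : rel T) : Prop := ~ has_cycle e.

Definition Gij_rel (q : nat) (V : finType) (sigma : 'I_q.+1 -> V -> V)
  (i j : 'I_q.+1) : rel V :=
  fun x y => (y == sigma i x) || (y == sigma j x).

(* Let rot := sigma j \o sigma i; two vertices joined by a rot-step are joined
   in G_ij, so it suffices that every black x is rot-connected to the black
   representative succ_i x := sigma 0 (sigma i x) of the next white vertex on
   its color-i cycle.  If not, follow the rot-orbit of x in S: from a white
   vertex y, go to its color-i vertex, on to the white vertex succ_i y, to the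
   color-j vertex of that one, which also carries rot y since
   succ_j (rot y) = succ_i y.  Going once around the orbit, starting and
   ending next to the color-j and color-i vertices of succ_i x but never
   meeting succ_i x itself, closes a cycle through succ_i x in S_ij. *)

From HB Require Import structures.
From mathcomp Require Import all_boot.

Set Implicit Arguments.
Unset Strict Implicit.
Unset Printing Implicit Defensive.

Definition avoiding (T : eqType) (e : rel T) (z : T) : rel T :=
  [rel x y | [&& e x y, x != z & y != z]].

Lemma connect_avoiding1 (T : finType) (e : rel T) z x y :
  e x y -> x != z -> y != z -> connect (avoiding e z) x y.
Proof. by move=> exy xz yz; apply/connect1/and3P. Qed.

Lemma avoiding_path_notin (T : eqType) (e : rel T) z a p :
  path (avoiding e z) a p -> z \notin p.
Proof.
elim: p a => // b p IHp a /= /andP[/and3P[_ _ bz] pth].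
by rewrite in_cons negb_or eq_sym bz (IHp b pth).
Qed.

Lemma has_cycle_through (T : finType) (e : rel T) (z a b : T) :
  a != b -> e z a -> e b z -> connect (avoiding e z) a b -> has_cycle e.
Proof.
move=> neq_ab ez_a eb_z /connectP[p pth b_last]; subst b.
move: neq_ab eb_z; case: (shortenP pth) => p' pth' uniq_p' _ {pth p}.
case: p' pth' uniq_p' => [|c p']; first by rewrite /= eqxx.
move=> pth' uniq_p' _ eb_z; exists [:: z, a, c & p']; split=> //.
- have /andP[/and3P[_ az _] _] := pth'.
  rewrite cons_uniq uniq_p' andbT in_cons negb_or eq_sym az.
  exact: avoiding_path_notin pth'.
- rewrite /= rcons_path ez_a eb_z andbT.
  by apply: sub_path pth' => x y /and3P[].
Qed.

Lemma connect_around_orbit (T U : finType) (f : T -> T) (g : T -> U) (e : rel U) x :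
  injective f ->
  (forall y, fconnect f x y -> y != x -> connect e (g y) (g (f y))) ->
  connect e (g (f x)) (g x).
Proof.
move=> injf step.
have orbit_prefix k : k < order f x -> connect e (g (f x)) (g (iter k.+1 f x)).
  elim: k => [|k IHk] lt_k; first exact: connect0.
  apply: connect_trans (IHk (ltnW lt_k)) _; rewrite [iter k.+2 _ _]iterS.
  apply: step; first exact: fconnect_iter.
  apply: contraTneq (lt_k) => iter_x.
  by have := findex_iter lt_k; rewrite iter_x findex0.
have := orbit_prefix (order f x).-1.
by rewrite prednK ?order_gt0 // iter_order // => /(_ (leqnn _)).
Qed.

Section Constellation.

Variables (q : nat) (V : finType) (sigma : 'I_q.+1 -> V -> V) (black : pred V).
Variables (i j : 'I_q.+1).
Hypothesis sigmaK : forall c, involutive (sigma c).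
Hypothesis black_sigma : forall c v, black (sigma c v) = ~~ black v.
Hypotheses (i_neq0 : i != ord0) (j_neq0 : j != ord0).

Local Notation succ := (cst_succ sigma).
Local Notation Sij := (Sij_rel sigma black i j).
Local Notation Gij := (Gij_rel sigma i j).

Definition ij_rot (y : V) : V := sigma j (sigma i y).

Lemma ij_rot_inj : injective ij_rot.
Proof. by move=> y z /(inv_inj (sigmaK j)) /(inv_inj (sigmaK i)). Qed.

Lemma cst_succ_inj c : injective (succ c).
Proof. by move=> y z /(inv_inj (sigmaK ord0)) /(inv_inj (sigmaK c)). Qed.

Lemma black_succ c y : black (succ c y) = black y.
Proof. by rewrite /cst_succ !black_sigma negbK. Qed.

Lemma black_ij_rot y : black (ij_rot y) = black y.
Proof. by rewrite /ij_rot !black_sigma negbK. Qed.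

Lemma cst_cycle_succ c y : cst_cycle sigma c (succ c y) = cst_cycle sigma c y.
Proof. by apply/setP=> z; rewrite !inE -(same_fconnect1 (@cst_succ_inj c)). Qed.

Lemma succ_j_ij_rot y : succ j (ij_rot y) = succ i y.
Proof. by rewrite /cst_succ /ij_rot sigmaK. Qed.

Lemma Sij_relC : symmetric Sij.
Proof. by case=> [?|[??]] [?|[??]]. Qed.

Lemma Sij_rel_white_i b : black b -> Sij (inl b) (inr (i, cst_cycle sigma i b)).
Proof. by move=> bb; rewrite /= eqxx /cst_edge_col bb i_neq0 eqxx. Qed.

Lemma Sij_rel_white_j b : black b -> Sij (inl b) (inr (j, cst_cycle sigma j b)).
Proof. by move=> bb; rewrite /= eqxx orbT /cst_edge_col bb j_neq0 eqxx. Qed.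

Lemma connect_ij_rot_avoiding (z y : V) :
  black y -> y != z -> succ i y != z -> ij_rot y != z ->
  connect (avoiding Sij (inl z)) (inl y) (inl (ij_rot y)).
Proof.
move=> by_ yz succ_z rot_z.
have bs : black (succ i y) by rewrite black_succ.
apply: (connect_trans (connect_avoiding1 (Sij_rel_white_i by_) _ _)) => //.
apply: (connect_trans (connect_avoiding1 (y := inl (succ i y)) _ _ _)) => //.
  by rewrite Sij_relC -cst_cycle_succ Sij_rel_white_i.
apply: (connect_trans (connect_avoiding1 (Sij_rel_white_j bs) _ _)) => //.
apply: connect_avoiding1 => //.
by rewrite Sij_relC -succ_j_ij_rot cst_cycle_succ Sij_rel_white_j ?black_ij_rot.
Qed.

Lemma fconnect_ij_rot_succ x :
  i != j -> is_forest Sij -> black x -> fconnect ij_rot x (succ i x).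
Proof.
move=> neq_ij forest bx; apply/negPn/negP => not_orbit; apply: forest.
set z := succ i x in not_orbit *.
have bz : black z by rewrite black_succ.
have orbit_z y : fconnect ij_rot x y -> y != z.
  by move=> xy; apply: contraNneq not_orbit => <-.
have orbit_black y : fconnect ij_rot x y -> black y.
  by move/iter_findex <-; elim: findex => //= k IHk; rewrite black_ij_rot.
pose Ci := inr (i, cst_cycle sigma i z) : cst_vertex q V.
pose Cj := inr (j, cst_cycle sigma j z) : cst_vertex q V.
have Cj_rot_x : connect (avoiding Sij (inl z)) Cj (inl (ij_rot x)).
  apply: connect_avoiding1 => //; last by rewrite /= orbit_z ?fconnect1.
  by rewrite Sij_relC /Cj /z -succ_j_ij_rot cst_cycle_succ Sij_rel_white_j ?black_ij_rot.
have rot_x_x : connect (avoiding Sij (inl z)) (inl (ij_rot x)) (inl x).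
  apply: connect_around_orbit ij_rot_inj _ => y xy neq_yx.
  apply: connect_ij_rot_avoiding.
  - exact: orbit_black.
  - exact: orbit_z.
  - by rewrite /z (inj_eq (@cst_succ_inj i)).
  - by apply: orbit_z; rewrite (connect_trans xy) ?fconnect1.
have x_Ci : connect (avoiding Sij (inl z)) (inl x) Ci.
  apply: connect_avoiding1 => //; last by rewrite /= orbit_z ?connect0.
  by rewrite /Ci /z cst_cycle_succ Sij_rel_white_i.
apply: (has_cycle_through (z := inl z) (a := Cj) (b := Ci)).
- by apply: contra_neq neq_ij => -[->].
- exact: Sij_rel_white_j.
- by rewrite Sij_relC Sij_rel_white_i.
- exact: connect_trans Cj_rot_x (connect_trans rot_x_x x_Ci).
Qed.

Lemma Gij_relC : symmetric Gij.
Proof.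
have flip c x y : (y == sigma c x) = (x == sigma c y).
  by apply/eqP/eqP => ->; rewrite sigmaK.
by move=> x y; rewrite /Gij_rel flip (flip j).
Qed.

Lemma connect_Gij_ij_rot x y : fconnect ij_rot x y -> connect Gij x y.
Proof.
apply: connect_sub => a _ /eqP <-.
apply: connect_trans (connect1 (_ : Gij a (sigma i a))) (connect1 _).
  by rewrite /Gij_rel eqxx.
by rewrite /Gij_rel /ij_rot eqxx orbT.
Qed.

End Constellation.

Theorem mainTheorem18 (q : nat) (V : finType) (sigma : 'I_q.+1 -> V -> V)
  (black : pred V) (r : V) (i j : 'I_q.+1) :
  2 <= q ->
  rooted_bipartite_colored_graph sigma black r ->
  i != ord0 -> j != ord0 -> i != j ->
  is_forest (Sij_rel sigma black i j) ->
  forall v : V, connect (Gij_rel sigma i j) v (sigma ord0 v).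
Proof.
move=> _ [[sigmaK _ _] black_sigma _] i_neq0 j_neq0 neq_ij forest v.
have Gsym := Gij_relC i j sigmaK.
wlog bv : v / black v.
  move=> black_case; case bv: (black v); first exact: black_case.
  rewrite (sym_connect_sym Gsym) -{2}(sigmaK ord0 v).
  by apply: black_case; rewrite black_sigma bv.
pose x := sigma i (sigma ord0 v).
have succ_x : cst_succ sigma i x = v by rewrite /cst_succ /x !sigmaK.
have bx : black x by rewrite /x !black_sigma bv.
have := fconnect_ij_rot_succ sigmaK black_sigma i_neq0 j_neq0 neq_ij forest bx.
rewrite succ_x => /connect_Gij_ij_rot; rewrite (sym_connect_sym Gsym) => v_x.
by apply: connect_trans v_x (connect1 _); rewrite /Gij_rel /x sigmaK eqxx.
Qed.
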